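(* Let $\mathscr{S}=(T,S,\sigma,\mu,\tau_T,\tau_S)$ be a relaxed scenario and $\mathscr{G}=(G_{<}(\mathscr{S}),G_{=}(\mathscr{S}),G_{>}(\mathscr{S}),\sigma)$. Then $T$ agrees with $(\mathscr{R}_T(\mathscr{G}),\mathscr{F}_T(\mathscr{G}))$ and $S$ agrees with $(\mathscr{R}_S(\mathscr{G}),\mathscr{F}_S(\mathscr{G}))$.
   Context: All trees are planted phylogenetic trees: a tree $T$ has a distinguished vertex $0_T$ of degree $1$ whose unique neighbor $\rho_T$ is the root, and every vertex other than $0_T$ and the leaves $L(T)$ has at least two children. For $x,y\in V(T)$ write $y\preceq_T x$ if $x$ lies on the path from $0_T$ to $y$; edges are written $uv$ with $v\prec_T u$. $\mathrm{lca}_T$ denotes the last common ancestor. A time map for $T$ is $\tau_T\colon V(T)\to\mathbb{R}$ with $\tau_T(x)<\tau_T(y)$ whenever $x\prec_T y$. A relaxed scenario $\mathscr{S}=(T,S,\sigma,\mu,\tau_T,\tau_S)$ consists of a gene tree $T$ with time map $\tau_T$, a species tree $S$ with time map $\tau_S$, a map $\sigma\colon L(T)\to M$ with $M\subseteq L(S)$, and a map $\mu\colon V(T)\to V(S)\cup E(S)$ such that (S0) $\mu(x)=0_S$ iff $x=0_T$; (S1) $\mu(x)\in L(S)$ iff $x\in L(T)$, in which case $\mu(x)=\sigma(x)$; (S2) if $\mu(x)\in V(S)$ then $\tau_S(\mu(x))=\tau_T(x)$; (S3) if $\mu(x)=uv\in E(S)$ then $\tau_S(v)<\tau_T(x)<\tau_S(u)$.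 The graphs $G_{=}(\mathscr{S})$, $G_{<}(\mathscr{S})$, $G_{>}(\mathscr{S})$ have vertex set $L(T)$, and for distinct $x,y$ the pair $xy$ is an edge of $G_{=}(\mathscr{S})$, $G_{<}(\mathscr{S})$, resp. $G_{>}(\mathscr{S})$ iff $\tau_T(\mathrm{lca}_T(x,y))$ is $=$, $<$, resp. $>$ than $\tau_S(\mathrm{lca}_S(\sigma(x),\sigma(y)))$. A tree displays the triple $xy|z$ if $\mathrm{lca}(x,y)\prec\mathrm{lca}(x,z)=\mathrm{lca}(y,z)$. A tree agrees with $(\mathscr{R},\mathscr{F})$ if it displays all triples of $\mathscr{R}$ and none of $\mathscr{F}$. For $\mathscr{G}=(G_<,G_=,G_>,\sigma)$ on vertex set $L$: $\mathscr{R}_T(\mathscr{G})$ contains $xy|z$ for $x,y,z\in L$ if ($xy\in E(G_<)$ and $xz,yz\notin E(G_<)$) or ($xz,yz\in E(G_>)$ and $xy\notin E(G_>)$); $\mathscr{F}_T(\mathscr{G})$ contains $xz|y$ and $yz|x$ if $xz,yz\in E(G_=)$ and $xy\notin E(G_=)$; $\mathscr{R}_S(\mathscr{G})$ contains $XY|Z$ if there are $x,y,z\in L$ with pairwise distinct colors $X=\sigma(x),Y=\sigma(y),Z=\sigma(z)$ and ($xz,yz\in E(G_<)$ and $xy\notin E(G_<)$) or ($xy\in E(G_>)$ and $xz,yz\notin E(G_>)$); $\mathscr{F}_S(\mathscr{G})$ contains $XZ|Y$ and $YZ|X$ if there are $x,y,z\in L$ with pairwise distinct colors $X,Y,Z$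 as before and $xz,yz\in E(G_=)$, $xy\notin E(G_=)$. *)

From mathcomp Require Import all_boot.
From Stdlib Require Import Reals.
Set Implicit Arguments. Unset Strict Implicit. Unset Printing Implicit Defensive.

(* A planted tree on a finite vertex type V is given by a parent map [par]
   and the distinguished vertex [z] (= 0_T), with par z = z. *)
Section Trees.
Variables (V : finType) (par : V -> V) (z : V).

Definition children (u : V) : {set V} := [set v | (v != z) && (par v == u)].

(* y ⪯ x : x lies on the path from 0_T to y  (x reachable from y going up) *)
Definition preceq (y x : V) : bool := connect (frel par) y x.
Definition prec (y x : V) : bool := preceq y x && (y != x).

Definition leaves : {set V} := [set v | (v != z) && (children v == set0)].

Definition planted_phylo_tree : Prop :=
  [/\ par z = z,
      (forall v, preceq v z),
      #|children z| = 1 &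
      (forall u, u != z -> children u != set0 -> 1 < #|children u|)].

Definition is_lca (x y w : V) : bool :=
  [&& preceq x w, preceq y w &
      [forall w', (preceq x w' && preceq y w') ==> preceq w w']].
Definition lca (x y : V) : V := odflt z [pick w | is_lca x y w].

Definition time_map (tau : V -> R) : Prop :=
  forall x y, prec x y -> (tau x < tau y)%R.

Definition displays (x y w : V) : Prop :=
  prec (lca x y) (lca x w) /\ lca x w = lca y w.

Definition agrees (Rs Fs : V -> V -> V -> Prop) : Prop :=
  forall a b c, (Rs a b c -> displays a b c) /\ (Fs a b c -> ~ displays a b c).
End Trees.

(* Images of mu: a vertex of S, or an edge uv of S (v ≺ u, u = par v). *)
Inductive loc (V : Type) := Vtx of V | Edg of V & V.
Arguments Vtx {V}. Arguments Edg {V}.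

Section Scenario.
Variables (VT VS : finType) (parT : VT -> VT) (zT : VT)
          (parS : VS -> VS) (zS : VS)
          (sigma : VT -> VS) (mu : VT -> loc VS)
          (tauT : VT -> R) (tauS : VS -> R).

Definition relaxed_scenario : Prop :=
  planted_phylo_tree parT zT /\ planted_phylo_tree parS zS /\
  time_map parT tauT /\ time_map parS tauS /\
  (forall x, x \in leaves parT zT -> sigma x \in leaves parS zS) /\
  (forall x u v, mu x = Edg u v -> v != zS /\ parS v = u) /\
  (forall x, mu x = Vtx zS <-> x = zT) /\
  (forall x, (exists v, mu x = Vtx v /\ v \in leaves parS zS)
             <-> x \in leaves parT zT) /\
  (forall x, x \in leaves parT zT -> mu x = Vtx (sigma x)) /\
  (forall x v, mu x = Vtx v -> tauS v = tauT x) /\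
  (forall x u v, mu x = Edg u v -> (tauS v < tauT x < tauS u)%R).

Definition Glt (x y : VT) : Prop :=
  x \in leaves parT zT /\ y \in leaves parT zT /\ x != y /\
  (tauT (lca parT zT x y) < tauS (lca parS zS (sigma x) (sigma y)))%R.
Definition Geq (x y : VT) : Prop :=
  x \in leaves parT zT /\ y \in leaves parT zT /\ x != y /\
  tauT (lca parT zT x y) = tauS (lca parS zS (sigma x) (sigma y)).
Definition Ggt (x y : VT) : Prop :=
  x \in leaves parT zT /\ y \in leaves parT zT /\ x != y /\
  (tauT (lca parT zT x y) > tauS (lca parS zS (sigma x) (sigma y)))%R.
End Scenario.

Section Triples.
Variables (VT VS : finType) (L : {set VT})
          (Gl Ge Gg : VT -> VT -> Prop) (sigma : VT -> VS).

Definition distinct3 (T : eqType) (a b c : T) : bool :=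
  [&& a != b, a != c & b != c].

Definition inL3 (x y z : VT) : bool := [&& x \in L, y \in L & z \in L].

Definition R_T (x y z : VT) : Prop :=
  [/\ inL3 x y z, distinct3 x y z &
      (Gl x y /\ ~ Gl x z /\ ~ Gl y z) \/ (Gg x z /\ Gg y z /\ ~ Gg x y)].

Definition F_T (a b c : VT) : Prop :=
  exists x y z, [/\ inL3 x y z, distinct3 x y z,
    Ge x z /\ Ge y z /\ ~ Ge x y &
    (a, b, c) = (x, z, y) \/ (a, b, c) = (y, z, x)].

Definition R_S (X Y Z : VS) : Prop :=
  exists x y z, [/\ inL3 x y z,
    [/\ sigma x = X, sigma y = Y & sigma z = Z], distinct3 X Y Z &
    (Gl x z /\ Gl y z /\ ~ Gl x y) \/ (Gg x y /\ ~ Gg x z /\ ~ Gg y z)].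

Definition F_S (A B C : VS) : Prop :=
  exists x y z, [/\ inL3 x y z,
    distinct3 (sigma x) (sigma y) (sigma z),
    Ge x z /\ Ge y z /\ ~ Ge x y &
    (A, B, C) = (sigma x, sigma z, sigma y) \/ (A, B, C) = (sigma y, sigma z, sigma x)].
End Triples.

(* Write d_T(x, y) for the time of lca_T(x, y) and d_S(x, y) for the time of
   lca_S(sigma x, sigma y).  Both satisfy the ultrametric inequality, and a tree
   displays xy|z exactly when d(x, y) < d(x, z).  The edges of G_<, G_= and G_>
   record how d_T and d_S compare on each pair, so every claim becomes a
   comparison of two ultrametrics on one triple: e.g. if d_T(x, y) < d_S(x, y)
   while d_S <= d_T on xz and yz, then d_T(x, y) >= d_T(x, z) would make
   d_T(x, y) the maximum of d_T on the triple, and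
   d_S(x, y) <= max(d_S(x, z), d_S(y, z)) <= d_T(x, y) is a contradiction. *)
From mathcomp Require Import all_boot.
From Stdlib Require Import Reals Lra.
Set Implicit Arguments. Unset Strict Implicit. Unset Printing Implicit Defensive.

(* No condition is put on the diagonal: for an lca-time map, [d a a] is the time of [a]. *)
Record ultrametric (T : Type) (d : T -> T -> R) : Prop := Ultrametric {
  ultraC : forall a b, d a b = d b a;
  ultra_max : forall a b c, (d a b <= d a c \/ d a b <= d b c)%R }.

Lemma ultrametric_comp (T U : Type) (d : U -> U -> R) (f : T -> U) :
  ultrametric d -> ultrametric (fun x y => d (f x) (f y)).
Proof. by case=> dC dmax; split=> [a b|a b c]; [exact: dC|exact: dmax]. Qed.

Section TwoUltrametrics.
Variables (T : Type) (d e : T -> T -> R).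
Hypotheses (ud : ultrametric d) (ue : ultrametric e).
Local Open Scope R_scope.

Lemma ultra_lt_of_below_pair a b c :
  d a b < e a b -> e a c <= d a c -> e b c <= d b c -> d a b < d a c.
Proof.
have := ultra_max ue a b c; have := ultra_max ud b c a.
rewrite (ultraC ud b a) (ultraC ud c a); lra.
Qed.

Lemma ultra_lt_of_above_pairs a b c :
  e a c < d a c -> e b c < d b c -> d a b <= e a b -> d a b < d a c.
Proof.
have := ultra_max ue a b c; have := ultra_max ud b c a.
rewrite (ultraC ud b a) (ultraC ud c a); lra.
Qed.

Lemma ultra_not_lt_of_eq_pairs a b c :
  d a c = e a c -> d b c = e b c -> d a b <> e a b ->
  ~ d a c < d a b /\ ~ d b c < d b a.
Proof.
have := ultra_max ud a b c; have := ultra_max ud b c a; have := ultra_max ud a c b.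
have := ultra_max ue a b c; have := ultra_max ue b c a; have := ultra_max ue a c b.
rewrite (ultraC ud b a) (ultraC ud c a) (ultraC ud c b).
rewrite (ultraC ue b a) (ultraC ue c a) (ultraC ue c b); lra.
Qed.

End TwoUltrametrics.

Section PlantedTree.
Variables (V : finType) (par : V -> V) (z : V).
Hypotheses (par_z : par z = z) (preceq_z : forall v, preceq par v z).

Lemma preceqP x y : reflect (exists n, y = iter n par x) (preceq par x y).
Proof.
apply: (iffP idP) => [xy | [n ->]]; last exact: fconnect_iter.
by exists (findex par x y); rewrite iter_findex.
Qed.

Lemma preceq_total x a b :
  preceq par x a -> preceq par x b -> preceq par a b \/ preceq par b a.
Proof.
move=> /preceqP[n ->] /preceqP[m ->].
case: (leqP n m) => [/subnK <- | /ltnW/subnK <-]; rewrite iterD.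
- by left; apply: fconnect_iter.
- by right; apply: fconnect_iter.
Qed.

Lemma preceq_anti x y : preceq par x y -> preceq par y x -> x = y.
Proof.
move=> /preceqP[n y_def] /preceqP[m x_def].
case: (posnP (n + m)) => [/eqP | nm_gt0].
  by rewrite addn_eq0 => /andP[/eqP n0 _]; rewrite y_def n0.
have x_periodic t : iter (t * (n + m)) par x = x.
  by elim: t => //= t IH; rewrite mulSn iterD IH addnC iterD -y_def -x_def.
have [k z_def] := preceqP _ _ (preceq_z x).
have x_z : x = z.
  rewrite -(x_periodic k) -(subnK (leq_pmulr k nm_gt0)) iterD -z_def.
  exact: iter_fix.
by rewrite y_def x_z iter_fix.
Qed.

Lemma is_lca_exists x y : exists w, is_lca par x y w.
Proof.
pose common w := preceq par x w && preceq par y w.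
have common_z : common z by rewrite /common !preceq_z.
case: (arg_minnP (findex par x) common_z) => w /andP[xw yw] w_min.
exists w; rewrite /is_lca xw yw; apply/forallP => w'.
apply/implyP => /andP[xw' yw'].
rewrite -(iter_findex xw') -(subnK (w_min w' (introT andP (conj xw' yw')))).
by rewrite iterD (iter_findex xw); apply: fconnect_iter.
Qed.

Lemma lca_spec x y :
  [/\ preceq par x (lca par z x y), preceq par y (lca par z x y) &
      forall w, preceq par x w -> preceq par y w -> preceq par (lca par z x y) w].
Proof.
rewrite /lca; case: pickP => [w /and3P[xw yw /forallP w_min] | no_lca].
  by split=> // w' xw' yw'; have := w_min w'; rewrite xw' yw'.
by have [w lca_w] := is_lca_exists x y; rewrite no_lca in lca_w.
Qed.

Lemma lca_l x y : preceq par x (lca par z x y). Proof. by case: (lca_spec x y). Qed.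
Lemma lca_r x y : preceq par y (lca par z x y). Proof. by case: (lca_spec x y). Qed.
Lemma lca_min x y w :
  preceq par x w -> preceq par y w -> preceq par (lca par z x y) w.
Proof. by case: (lca_spec x y) => _ _; apply. Qed.

Lemma lcaC x y : lca par z x y = lca par z y x.
Proof. by apply: preceq_anti; apply: lca_min; rewrite ?lca_l ?lca_r. Qed.

Lemma lca_below_lca a b c :
  preceq par (lca par z a b) (lca par z a c) \/
  preceq par (lca par z a b) (lca par z b c).
Proof.
case: (preceq_total (lca_r a c) (lca_r b c)) => [ac_bc | bc_ac].
- right; apply: lca_min; [exact: connect_trans (lca_l a c) ac_bc | exact: lca_l].
- left; apply: lca_min; [exact: lca_l | exact: connect_trans (lca_l b c) bc_ac].
Qed.

Lemma displays_of_not_preceq a b c :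
  ~~ preceq par (lca par z a c) (lca par z a b) -> displays par z a b c.
Proof.
move=> ac_not_ab.
have ab_ac : preceq par (lca par z a b) (lca par z a c).
  by case: (preceq_total (lca_l a b) (lca_l a c)) => // ac_ab; rewrite ac_ab in ac_not_ab.
have ab_bc : preceq par (lca par z a b) (lca par z b c).
  case: (preceq_total (lca_r a b) (lca_l b c)) => // bc_ab.
  by rewrite (lca_min (lca_l a b) (connect_trans (lca_r b c) bc_ab)) in ac_not_ab.
split.
  by rewrite /prec ab_ac; apply: contraNneq ac_not_ab => <-; apply: connect0.
apply: preceq_anti; apply: lca_min.
- exact: connect_trans (lca_l a b) ab_bc.
- exact: lca_r.
- exact: connect_trans (lca_r a b) ab_ac.
- exact: lca_r.
Qed.

Variable tau : V -> R.
Hypothesis tau_time : time_map par tau.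

Lemma time_map_preceq a b : preceq par a b -> (tau a <= tau b)%R.
Proof.
move=> ab; case: (eqVneq a b) => [-> | a_neq_b]; first exact: Rle_refl.
by apply: Rlt_le; apply: tau_time; rewrite /prec ab a_neq_b.
Qed.

Lemma ultrametric_lca_time : ultrametric (fun x y => tau (lca par z x y)).
Proof.
split=> [a b | a b c]; first by rewrite lcaC.
by case: (lca_below_lca a b c) => /time_map_preceq; [left | right].
Qed.

Lemma displays_lca_timeE a b c :
  displays par z a b c <-> (tau (lca par z a b) < tau (lca par z a c))%R.
Proof.
split=> [[ab_ac _] | ab_lt_ac]; first exact: tau_time.
apply: displays_of_not_preceq; apply/negP => /time_map_preceq; lra.
Qed.

End PlantedTree.

Section Scenario.
Variables (VT VS : finType) (parT : VT -> VT) (zT : VT)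
  (parS : VS -> VS) (zS : VS) (sigma : VT -> VS)
  (tauT : VT -> R) (tauS : VS -> R).
Hypotheses (parT_z : parT zT = zT) (preceqT_z : forall v, preceq parT v zT)
  (parS_z : parS zS = zS) (preceqS_z : forall v, preceq parS v zS)
  (tauT_time : time_map parT tauT) (tauS_time : time_map parS tauS).

Local Notation L := (leaves parT zT).
Local Notation Gl := (Glt parT zT parS zS sigma tauT tauS).
Local Notation Ge := (Geq parT zT parS zS sigma tauT tauS).
Local Notation Gg := (Ggt parT zT parS zS sigma tauT tauS).

Let dT x y := tauT (lca parT zT x y).
Let dS x y := tauS (lca parS zS (sigma x) (sigma y)).

Let ultra_dT : ultrametric dT.
Proof. exact: ultrametric_lca_time. Qed.

Let ultra_dS : ultrametric dS.
Proof. exact: (ultrametric_comp sigma (ultrametric_lca_time parS_z preceqS_z tauS_time)). Qed.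

Lemma not_Glt x y : x \in L -> y \in L -> x != y -> ~ Gl x y -> (dS x y <= dT x y)%R.
Proof. by move=> xL yL xy not_lt; apply: Rnot_lt_le => lt; apply: not_lt. Qed.

Lemma not_Ggt x y : x \in L -> y \in L -> x != y -> ~ Gg x y -> (dT x y <= dS x y)%R.
Proof. by move=> xL yL xy not_gt; apply: Rnot_lt_le => gt; apply: not_gt. Qed.

Lemma not_Geq x y : x \in L -> y \in L -> x != y -> ~ Ge x y -> dT x y <> dS x y.
Proof. by move=> xL yL xy not_eq xy_eq; apply: not_eq; do 3 split=> //. Qed.

Lemma gene_tree_agrees : agrees parT zT (R_T L Gl Gg) (F_T L Ge).
Proof.
move=> a b c; split.
  case=> /and3P[aL bL cL] /and3P[ab ac bc] G_abc.
  apply/(displays_lca_timeE parT_z preceqT_z tauT_time).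
  case: G_abc => [[[_ [_ [_ lt_ab]]] [not_lt_ac not_lt_bc]]
                | [[_ [_ [_ gt_ac]]] [[_ [_ [_ gt_bc]]] not_gt_ab]]].
  - apply: (ultra_lt_of_below_pair ultra_dT ultra_dS) => //.
    + exact: not_Glt.
    + exact: not_Glt.
  - by apply: (ultra_lt_of_above_pairs ultra_dT ultra_dS) => //; apply: not_Ggt.
case=> x [y [w [/and3P[xL yL _] /and3P[xy _ _]
                [[_ [_ [_ eq_xw]]] [[_ [_ [_ eq_yw]]] not_eq_xy]]]]].
have [not_xw_y not_yw_x] := ultra_not_lt_of_eq_pairs ultra_dT ultra_dS
  eq_xw eq_yw (not_Geq xL yL xy not_eq_xy).
by case=> [[-> -> ->] | [-> -> ->]] /(displays_lca_timeE parT_z preceqT_z tauT_time).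
Qed.

Lemma species_tree_agrees : agrees parS zS (R_S L Gl Gg sigma) (F_S L Ge sigma).
Proof.
move=> A B C; split.
  case=> x [y [w [/and3P[xL yL wL] [<- <- <-] /and3P[sxy sxw syw] G_xyw]]].
  have xy : x != y by apply: contra_neq sxy => ->.
  have xw : x != w by apply: contra_neq sxw => ->.
  have yw : y != w by apply: contra_neq syw => ->.
  apply/(displays_lca_timeE parS_z preceqS_z tauS_time).
  case: G_xyw => [[[_ [_ [_ lt_xw]]] [[_ [_ [_ lt_yw]]] not_lt_xy]]
                | [[_ [_ [_ gt_xy]]] [not_gt_xw not_gt_yw]]].
  - by apply: (ultra_lt_of_above_pairs ultra_dS ultra_dT) => //; apply: not_Glt.
  - apply: (ultra_lt_of_below_pair ultra_dS ultra_dT) => //.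
    + exact: not_Ggt.
    + exact: not_Ggt.
case=> x [y [w [/and3P[xL yL _] /and3P[sxy _ _]
                [[_ [_ [_ eq_xw]]] [[_ [_ [_ eq_yw]]] not_eq_xy]]]]].
have xy : x != y by apply: contra_neq sxy => ->.
have [not_xw_y not_yw_x] := ultra_not_lt_of_eq_pairs ultra_dS ultra_dT
  (esym eq_xw) (esym eq_yw) (not_eq_sym (not_Geq xL yL xy not_eq_xy)).
by case=> [[-> -> ->] | [-> -> ->]] /(displays_lca_timeE parS_z preceqS_z tauS_time).
Qed.

End Scenario.

Theorem proposition2 (VT VS : finType) (parT : VT -> VT) (zT : VT)
    (parS : VS -> VS) (zS : VS) (sigma : VT -> VS) (mu : VT -> loc VS)
    (tauT : VT -> R) (tauS : VS -> R) :
  relaxed_scenario parT zT parS zS sigma mu tauT tauS ->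
  let L := leaves parT zT in
  let Gl := Glt parT zT parS zS sigma tauT tauS in
  let Ge := Geq parT zT parS zS sigma tauT tauS in
  let Gg := Ggt parT zT parS zS sigma tauT tauS in
  agrees parT zT (R_T L Gl Gg) (F_T L Ge) /\
  agrees parS zS (R_S L Gl Gg sigma) (F_S L Ge sigma).
Proof.
case=> [[parT_z preceqT_z _ _] [[parS_z preceqS_z _ _] [tauT_time [tauS_time _]]]] /=.
by split; [apply: gene_tree_agrees | apply: species_tree_agrees].
Qed.
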